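(* Let $\alpha_1,\ldots,\alpha_n\in\mathbb{R}^n$ be linearly independent unit vectors, let $Q=\{y\in\mathbb{R}^n:(y,\alpha_i)\geqslant0 \text{ for all } i\}$ with walls $B_i=\{y\in Q:(y,\alpha_i)=0\}$, and let $d>0$ and the unit vector $\mathbf{e}\in\mathbb{R}^n$ be determined by $(\mathbf{e},\alpha_i)=d$ for all $i=1,\ldots,n$ (equivalently, $d$ is the distance from the origin to the affine hyperplane through the points $\alpha_1,\ldots,\alpha_n$ and $\mathbf{e}$ its unit normal pointing away from the origin). Consider a billiard trajectory in $Q$ with unit speed that has undergone $N$ reflections at the walls, and let $\mathbf{v}_0,\mathbf{v}_1,\ldots,\mathbf{v}_N$ (points on the unit sphere) be its successive velocities. Then the length $L$ of the polygonal line through $\mathbf{v}_0,\ldots,\mathbf{v}_N$ satisfies $$L=\sum_{k=0}^{N-1}\|\mathbf{v}_{k+1}-\mathbf{v}_k\|\leqslant\frac{2}{d}.$$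
   Context: A billiard trajectory in $Q$: a point particle moves with uniform motion in the interior of $Q$ and undergoes specular reflections at the walls $B_i$, i.e. upon hitting $B_i$ its velocity $v$ is replaced by $v-2(v,\alpha_i)\alpha_i$; motion is not defined after reaching a corner $B_i\cap B_j$, $i\ne j$. *)

From HB Require Import structures.
From mathcomp Require Import all_boot all_order all_algebra.
From mathcomp Require Import reals.
Set Implicit Arguments. Unset Strict Implicit. Unset Printing Implicit Defensive.
Import Order.TTheory GRing.Theory Num.Theory.
Local Open Scope ring_scope.

Definition dot (R : realType) (n : nat) (u v : 'rV[R]_n) : R :=
  \sum_(i < n) u ord0 i * v ord0 i.

Definition enorm (R : realType) (n : nat) (u : 'rV[R]_n) : R :=
  Num.sqrt (dot u u).

Definition inQ (R : realType) (n : nat) (alpha : 'I_n -> 'rV[R]_n) (y : 'rV[R]_n) :=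
  forall j, 0 <= dot y (alpha j).

Definition inQint (R : realType) (n : nat) (alpha : 'I_n -> 'rV[R]_n) (y : 'rV[R]_n) :=
  forall j, 0 < dot y (alpha j).

Definition reflect_at (R : realType) (n : nat) (a v : 'rV[R]_n) : 'rV[R]_n :=
  v - (2 * dot v a) *: a.

(* A unit-speed billiard trajectory in Q with N reflections.
   y 0 is the starting point, y (k+1) (k < N) is the point of the (k+1)-th
   reflection, on wall B_(w k) and on no other wall (no corner);
   v k is the velocity on the k-th free segment (from y k to y (k+1)), the
   segment being traversed in time t k > 0 through the interior of Q;
   v (k+1) is obtained from v k by reflection at wall w k. *)
Definition billiard_traj (R : realType) (n : nat) (alpha : 'I_n -> 'rV[R]_n)
    (N : nat) (y v : nat -> 'rV[R]_n) (t : nat -> R) (w : nat -> 'I_n) : Prop :=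
  [/\ inQ alpha (y 0%N), dot (v 0%N) (v 0%N) = 1 &
  forall k, (k < N)%N ->
    [/\ 0 < t k,
        y k.+1 = y k + t k *: v k,
        (forall s, 0 < s -> s < t k -> inQint alpha (y k + s *: v k)),
        [/\ dot (y k.+1) (alpha (w k)) = 0
           & forall j, j != w k -> 0 < dot (y k.+1) (alpha j)] &
        v k.+1 = reflect_at (alpha (w k)) (v k)]].

(* Each reflection at a wall alpha_i changes the velocity by -2 (v, alpha_i) alpha_i, and
   (v, alpha_i) < 0 because the particle reaches the wall from the interior of Q.  Since
   (alpha_i, e) = d for every wall, the length of that jump equals its component along e
   divided by d.  The length L therefore telescopes to ((v_N - v_0), e) / d, which is at
   most 2 / d because v_0, v_N and e are unit vectors. *)
From HB Require Import structures.
From mathcomp Require Import all_boot all_order all_algebra.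
From mathcomp Require Import reals.
From mathcomp Require Import ring lra.
Set Implicit Arguments. Unset Strict Implicit. Unset Printing Implicit Defensive.
Import Order.TTheory GRing.Theory Num.Theory.
Local Open Scope ring_scope.

Section Dot.
Variables (R : realType) (n : nat).
Implicit Types (a u v w : 'rV[R]_n).

Lemma dotC u v : dot u v = dot v u.
Proof. by apply: eq_bigr => i _; rewrite mulrC. Qed.

Lemma dotDl u w v : dot (u + w) v = dot u v + dot w v.
Proof. by rewrite /dot -big_split; apply: eq_bigr => i _; rewrite !mxE mulrDl. Qed.

Lemma dotZl c u v : dot (c *: u) v = c * dot u v.
Proof. by rewrite /dot mulr_sumr; apply: eq_bigr => i _; rewrite !mxE mulrA. Qed.

Lemma dotNl u v : dot (- u) v = - dot u v.
Proof. by rewrite -scaleN1r dotZl mulN1r. Qed.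

Lemma dotBl u w v : dot (u - w) v = dot u v - dot w v.
Proof. by rewrite dotDl dotNl. Qed.

Lemma dotDr u w v : dot v (u + w) = dot v u + dot v w.
Proof. by rewrite dotC dotDl !(dotC v). Qed.

Lemma dotZr c u v : dot v (c *: u) = c * dot v u.
Proof. by rewrite dotC dotZl dotC. Qed.

Lemma dotBr u w v : dot v (u - w) = dot v u - dot v w.
Proof. by rewrite dotC dotBl !(dotC v). Qed.

Lemma dot_ge0 u : 0 <= dot u u.
Proof. by apply: sumr_ge0 => i _; rewrite -expr2 sqr_ge0. Qed.

Lemma dot_unit_le1 u v : dot u u = 1 -> dot v v = 1 -> `|dot u v| <= 1.
Proof.
move=> u1 v1; have := dot_ge0 (u - v); have := dot_ge0 (u + v).
rewrite !dotBl !dotDl !dotBr !dotDr u1 v1 (dotC v u) => ? ?.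
by rewrite ler_norml; apply/andP; split; lra.
Qed.

Lemma enorm_scale_unit c a : dot a a = 1 -> enorm (c *: a) = `|c|.
Proof. by move=> a1; rewrite /enorm dotZl dotZr a1 mulr1 -expr2 sqrtr_sqr. Qed.

Lemma dot_reflect_at a v u :
  dot (reflect_at a v) u = dot v u - 2 * dot v a * dot a u.
Proof. by rewrite /reflect_at dotBl dotZl. Qed.

Lemma dot_reflect_at_id a v : dot a a = 1 ->
  dot (reflect_at a v) (reflect_at a v) = dot v v.
Proof.
move=> a1; rewrite !dot_reflect_at /reflect_at !dotBr !dotZr a1 (dotC a v); ring.
Qed.

Lemma enorm_reflect_at_sub a v : dot a a = 1 ->
  enorm (reflect_at a v - v) = 2 * `|dot v a|.
Proof.
move=> a1; rewrite /reflect_at addrAC subrr add0r -scaleNr enorm_scale_unit //.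
by rewrite normrN normrM ger0_norm.
Qed.

Lemma enorm_reflect_at_sub_dot a v e d : dot a a = 1 -> dot e a = d -> 0 < d ->
  dot v a < 0 -> enorm (reflect_at a v - v) = (dot (reflect_at a v) e - dot v e) / d.
Proof.
move=> a1 ead d_gt0 va_lt0.
rewrite enorm_reflect_at_sub // ltr0_norm // dot_reflect_at (dotC a e) ead.
by field; rewrite gt_eqF.
Qed.

End Dot.

Section Billiard.
Variables (R : realType) (n : nat) (alpha : 'I_n -> 'rV[R]_n).
Variables (N : nat) (y v : nat -> 'rV[R]_n) (t : nat -> R) (w : nat -> 'I_n).
Hypothesis traj : billiard_traj alpha N y v t w.

Lemma billiard_traj_reflect k : (k < N)%N -> v k.+1 = reflect_at (alpha (w k)) (v k).
Proof. by case: traj => _ _ /(_ k) step /step []. Qed.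

(* Halfway along the k-th segment the particle is strictly inside Q and at its end it is
   on the wall w k, so it moves towards that wall. *)
Lemma billiard_traj_towards_wall k : (k < N)%N -> dot (v k) (alpha (w k)) < 0.
Proof.
case: traj => _ _ /(_ k) step /step [t_gt0 yS inside [on_wall _] _].
have half_gt0 : 0 < t k / 2 by rewrite divr_gt0.
have half_lt : t k / 2 < t k by rewrite ltr_pdivrMr // ltr_pMr // ltr1n.
move: (inside _ half_gt0 half_lt (w k)) on_wall.
rewrite yS !dotDl !dotZl => mid_gt0 end_eq0.
have : t k / 2 * dot (v k) (alpha (w k)) < 0 by nra.
by rewrite pmulr_rlt0.
Qed.

Lemma billiard_traj_unit_speed (Hunit : forall i, dot (alpha i) (alpha i) = 1) k :
  (k <= N)%N -> dot (v k) (v k) = 1.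
Proof.
case: traj => _ v0_unit _; elim: k => [//|k IH] kN.
by rewrite billiard_traj_reflect // dot_reflect_at_id // IH // ltnW.
Qed.

End Billiard.

Theorem lemma1 (R : realType) (n : nat) (alpha : 'I_n -> 'rV[R]_n)
    (e : 'rV[R]_n) (d : R)
    (Hunit : forall i, dot (alpha i) (alpha i) = 1)
    (Hfree : row_free (\matrix_(i < n) alpha i))
    (He : dot e e = 1) (Hd : 0 < d)
    (Hed : forall i, dot e (alpha i) = d)
    (N : nat) (y v : nat -> 'rV[R]_n) (t : nat -> R) (w : nat -> 'I_n)
    (Htraj : billiard_traj alpha N y v t w) :
  \sum_(k < N) enorm (v k.+1 - v k) <= 2 / d.
Proof.
have jump k : (k < N)%N -> enorm (v k.+1 - v k) = (dot (v k.+1) e - dot (v k) e) / d.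
  move=> kN; rewrite (billiard_traj_reflect Htraj kN).
  exact: enorm_reflect_at_sub_dot (billiard_traj_towards_wall Htraj kN).
rewrite (eq_bigr _ (fun (k : 'I_N) _ => jump k (ltn_ord k))) -mulr_suml.
rewrite -(big_mkord xpredT (fun k => dot (v k.+1) e - dot (v k) e)) telescope_sumr //.
rewrite ler_pM2r ?invr_gt0 //.
have := dot_unit_le1 (billiard_traj_unit_speed Htraj Hunit (leqnn N)) He.
have := dot_unit_le1 (billiard_traj_unit_speed Htraj Hunit (leq0n N)) He.
rewrite !ler_norml => /andP [? _] /andP [_ ?]; lra.
Qed.
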